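(* Let $f\in\mathrm{Homeo}_+(\mathbb{R})$ satisfy $f(x+1)=f(x)+2$ for all $x$ and $f(0)=0$, and let $\theta_f$ be defined on $PL_2(\mathbb{R})$ as in the context. Then $\theta_f:PL_2(\mathbb{R})\to\mathrm{Homeo}_+(\mathbb{R})$ is a group homomorphism.
   Context: $\mathbb{Q}_2$ denotes the dyadic rationals. $GA(\mathbb{Q}_2)$ is the group of affine maps $x\mapsto 2^nx+r$ ($n\in\mathbb{Z}$, $r\in\mathbb{Q}_2$); $T_r(x)=x+r$, $D(x)=2x$. There is a unique injective homomorphism $\theta_f:GA(\mathbb{Q}_2)\to\mathrm{Homeo}_+(\mathbb{R})$ with $\theta_f(T_1)=T_1$, $\theta_f(D)=f$. For $r=p/2^q\in\mathbb{Q}_2$ put $\bar r=f^{-q}(p)$ (well defined, strictly increasing). $PL_2(\mathbb{R})$ is the group of homeomorphisms $h$ of $\mathbb{R}$ that are piecewise linear with a locally finite set of break points, all in $\mathbb{Q}_2$, such that near each non-break point $h$ agrees with an element of $GA(\mathbb{Q}_2)$. For $h\in PL_2(\mathbb{R})$ choose a strictly increasing sequence $(x_n)_{n\in\mathbb{Z}}$ in $\mathbb{Q}_2$ with $x_n\to\pm\infty$ as $n\to\pm\infty$ and $\gamma_n\in GA(\mathbb{Q}_2)$ with $h=\gamma_n$ on $[x_n,x_{n+1}]$, and define $\theta_f(h)(t)=\theta_f(\gamma_n)(t)$ for $t\in[\bar x_n,\bar x_{n+1})$; this is independent of the choices and yields an increasing homeomorphism of $\mathbb{R}$. *)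

From Stdlib Require Import Reals Lra ZArith List ClassicalEpsilon.
Open Scope R_scope.

Definition dyadic (r : R) : Prop :=
  exists (p : Z) (q : nat), r = IZR p / 2 ^ q.

Definition dyad_rep (r : R) : Z * nat :=
  epsilon (inhabits (0%Z, 0%nat))
    (fun pq => r = IZR (fst pq) / 2 ^ (snd pq)).

Definition homeo (h : R -> R) : Prop :=
  continuity h /\
  exists g : R -> R, continuity g /\
    (forall x, g (h x) = x) /\ (forall y, h (g y) = y).

Definition homeo_plus (h : R -> R) : Prop :=
  homeo h /\ (forall x y, x < y -> h x < h y).

Definition finv (f : R -> R) (y : R) : R :=
  epsilon (inhabits 0) (fun x => f x = y).

Definition fZ (f : R -> R) (k : Z) (x : R) : R :=
  match k with
  | Z0 => x
  | Zpos p => Nat.iter (Pos.to_nat p) f x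
  | Zneg p => Nat.iter (Pos.to_nat p) (finv f) x
  end.

Definition GA_elt := (Z * R)%type.
Definition GA_valid (g : GA_elt) : Prop := dyadic (snd g).
Definition ga_app (g : GA_elt) (x : R) : R := powerRZ 2 (fst g) * x + snd g.

(* theta_f on GA(Q_2): theta_f(T_1) = T_1, theta_f(D) = f, hence
   theta_f(T_{p/2^q}) = f^{-q} o T_p o f^q  and
   theta_f(x |-> 2^n x + r) = theta_f(T_r) o f^n. *)
Definition theta_GA (f : R -> R) (g : GA_elt) (t : R) : R :=
  let pq := dyad_rep (snd g) in
  fZ f (- Z.of_nat (snd pq))
     (fZ f (Z.of_nat (snd pq)) (fZ f (fst g) t) + IZR (fst pq)).

Definition bar (f : R -> R) (r : R) : R :=
  let pq := dyad_rep r in fZ f (- Z.of_nat (snd pq)) (IZR (fst pq)).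

Definition locally_finite (B : R -> Prop) : Prop :=
  forall a b : R, exists l : list R, forall x, B x -> a <= x <= b -> In x l.

Definition is_PL2 (h : R -> R) : Prop :=
  homeo h /\
  exists B : R -> Prop,
    (forall b, B b -> dyadic b) /\ locally_finite B /\
    (forall x, ~ B x ->
       exists eps, 0 < eps /\ exists g : GA_elt, GA_valid g /\
         forall y, Rabs (y - x) < eps -> h y = ga_app g y).

Definition PL_data (h : R -> R) (d : (Z -> R) * (Z -> GA_elt)) : Prop :=
  let x := fst d in let gam := snd d in
  (forall n, x n < x (n + 1)%Z) /\
  (forall n, dyadic (x n)) /\
  (forall M, exists n, M < x n) /\
  (forall M, exists n, x n < M) /\
  (forall n, GA_valid (gam n)) /\
  (forall n y, x n <= y <= x (n + 1)%Z -> h y = ga_app (gam n) y).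

Definition theta_PL (f : R -> R) (h : R -> R) (t : R) : R :=
  let d := epsilon (inhabits ((fun _ : Z => 0), (fun _ : Z => (0%Z, 0))))
             (PL_data h) in
  let n := epsilon (inhabits 0%Z)
             (fun n => bar f (fst d n) <= t < bar f (fst d (n + 1)%Z)) in
  theta_GA f (snd d n) t.

From Stdlib Require Import Reals Lra Lia ZArith List FinFun ClassicalEpsilon Classical.
Open Scope R_scope.

(* theta_f is determined on GA(Q_2) by theta_f(T_1) = T_1 and theta_f(D) = f; the relation
   f o T_1 = T_2 o f makes theta_f(T_{p/2^q}) = f^-q o T_p o f^q independent of the
   representation of p/2^q, and theta_f is a homomorphism on GA(Q_2). Moreover
   theta_f(g)(bar s) = bar (g s) and bar is increasing. Hence whenever h agrees with an
   affine g on a dyadic interval [a, b], theta_f(h) = theta_f(g) on [bar a, bar b], whatever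
   subdivision was used to define theta_f(h). For h1 o h2, pulling the interval of h1 at
   theta_f(g2)(t) back through g2 gives an interval on which h1 o h2 agrees with g1 o g2. *)

Lemma pow2_pos (n : nat) : 0 < 2 ^ n.
Proof. apply pow_lt; lra. Qed.

Lemma dyadic_IZR z : dyadic (IZR z).
Proof. exists z, 0%nat. simpl. field. Qed.

Lemma dyadic_common_denom r s : dyadic r -> dyadic s ->
  exists p1 p2 q, r = IZR p1 / 2 ^ q /\ s = IZR p2 / 2 ^ q.
Proof.
  intros [p1 [q1 E1]] [p2 [q2 E2]].
  exists (p1 * 2 ^ Z.of_nat q2)%Z, (p2 * 2 ^ Z.of_nat q1)%Z, (q1 + q2)%nat.
  rewrite !mult_IZR, <- !pow_IZR, pow_add.
  pose proof (pow2_pos q1). pose proof (pow2_pos q2).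
  split; [rewrite E1 | rewrite E2]; simpl; field; lra.
Qed.

Lemma dyadic_add r s : dyadic r -> dyadic s -> dyadic (r + s).
Proof.
  intros Hr Hs. destruct (dyadic_common_denom r s Hr Hs) as [p1 [p2 [q [-> ->]]]].
  exists (p1 + p2)%Z, q. rewrite plus_IZR. pose proof (pow2_pos q). field. lra.
Qed.

Lemma dyadic_opp r : dyadic r -> dyadic (- r).
Proof.
  intros [p [q ->]]. exists (- p)%Z, q. rewrite opp_IZR. pose proof (pow2_pos q). field. lra.
Qed.

Lemma dyadic_sub r s : dyadic r -> dyadic s -> dyadic (r - s).
Proof. intros. apply dyadic_add, dyadic_opp; assumption. Qed.

Lemma dyadic_mul_powerRZ k r : dyadic r -> dyadic (powerRZ 2 k * r).
Proof.
  intros [p [q ->]]. pose proof (pow2_pos q). destruct k as [|n|n]; simpl.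
  - exists p, q. field. lra.
  - exists (p * 2 ^ Z.of_nat (Pos.to_nat n))%Z, q.
    rewrite mult_IZR, <- pow_IZR. simpl. field. lra.
  - exists p, (q + Pos.to_nat n)%nat. rewrite pow_add.
    pose proof (pow2_pos (Pos.to_nat n)). field. lra.
Qed.

Definition ga_comp (g1 g2 : GA_elt) : GA_elt :=
  ((fst g1 + fst g2)%Z, powerRZ 2 (fst g1) * snd g2 + snd g1).

Definition ga_inv (g : GA_elt) : GA_elt :=
  ((- fst g)%Z, - (powerRZ 2 (- fst g) * snd g)).

Lemma ga_comp_app g1 g2 y : ga_app (ga_comp g1 g2) y = ga_app g1 (ga_app g2 y).
Proof. unfold ga_app, ga_comp; simpl. rewrite powerRZ_add by lra. ring. Qed.

Lemma ga_app_inv g y : ga_app g (ga_app (ga_inv g) y) = y.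
Proof.
  unfold ga_app, ga_inv; simpl. rewrite powerRZ_neg'.
  assert (0 < powerRZ 2 (fst g)) by (apply powerRZ_lt; lra). field. lra.
Qed.

Lemma ga_inv_app g y : ga_app (ga_inv g) (ga_app g y) = y.
Proof.
  unfold ga_app, ga_inv; simpl. rewrite powerRZ_neg'.
  assert (0 < powerRZ 2 (fst g)) by (apply powerRZ_lt; lra). field. lra.
Qed.

Lemma ga_comp_valid g1 g2 : GA_valid g1 -> GA_valid g2 -> GA_valid (ga_comp g1 g2).
Proof. intros. apply dyadic_add; [apply dyadic_mul_powerRZ|]; assumption. Qed.

Lemma ga_inv_valid g : GA_valid g -> GA_valid (ga_inv g).
Proof. intros. apply dyadic_opp, dyadic_mul_powerRZ; assumption. Qed.

Lemma ga_app_dyadic g y : GA_valid g -> dyadic y -> dyadic (ga_app g y).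
Proof. intros. apply dyadic_add; [apply dyadic_mul_powerRZ|]; assumption. Qed.

Lemma ga_app_lt g x y : x < y -> ga_app g x < ga_app g y.
Proof.
  unfold ga_app. intros. assert (0 < powerRZ 2 (fst g)) by (apply powerRZ_lt; lra). nra.
Qed.

Lemma ga_app_le g x y : x <= y -> ga_app g x <= ga_app g y.
Proof. intros [H|H]; [left; apply ga_app_lt | subst]; lra. Qed.

Lemma ga_continuity g : continuity (ga_app g).
Proof. unfold ga_app. reg. Qed.

Lemma powerRZ2_inj (a b : Z) : powerRZ 2 a = powerRZ 2 b -> a = b.
Proof.
  rewrite !powerRZ_Rpower by lra. intros E.
  destruct (Z.lt_total a b) as [h|[h|h]]; auto; apply IZR_lt in h;
    apply (Rpower_lt 2) in h; lra.
Qed.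

Lemma ga_eq_two_points g g' u v : u < v ->
  ga_app g u = ga_app g' u -> ga_app g v = ga_app g' v -> g = g'.
Proof.
  destruct g as [n r], g' as [n' r']. unfold ga_app; simpl. intros H E1 E2.
  assert (E : powerRZ 2 n = powerRZ 2 n').
  { apply (Rmult_eq_reg_r (v - u)); lra. }
  apply powerRZ2_inj in E. subst. f_equal. lra.
Qed.

Definition no_point_between (B : R -> Prop) (u v : R) : Prop :=
  forall y, B y -> ~ (u < y < v).

Lemma locally_finite_next B t : (forall b, B b -> dyadic b) -> locally_finite B ->
  dyadic t ->
  exists s, t < s <= t + 1 /\ dyadic s /\ (B s \/ s = t + 1) /\ no_point_between B t s.
Proof.
  intros Bdy LF Ht. destruct (LF t (t + 1)) as [l Hl].
  assert (Hmin : exists s, t < s <= t + 1 /\ (B s \/ s = t + 1) /\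
            forall y, In y l -> B y -> t < y -> y <= t + 1 -> s <= y).
  { clear Hl. induction l as [|a l [s [Hs [HBs Hmin]]]].
    - exists (t + 1). split; [lra|split; [auto|]]. intros y [].
    - destruct (classic (B a /\ t < a < s)) as [[Ba Ha]|Ha].
      + exists a. split; [lra|split; [auto|]].
        intros y [<-|Hy] By Hty Hyt; [lra|]. specialize (Hmin y Hy By Hty Hyt). lra.
      + exists s. split; [auto|split; [auto|]].
        intros y [<-|Hy] By Hty Hyt; auto.
        destruct (Rle_lt_dec s a); auto. exfalso. apply Ha. split; [auto|lra]. }
  destruct Hmin as [s [Hs [HBs Hmin]]]. exists s. split; [auto|split; [|split; [auto|]]].
  - destruct HBs as [HBs| ->]; auto. apply dyadic_add, (dyadic_IZR 1); auto.
  - intros y By Hy. assert (s <= y) by (apply Hmin; auto; try apply Hl; auto; lra). lra.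
Qed.

Lemma nat_seq_lt (u : nat -> R) : (forall k, u k < u (S k)) ->
  forall i j, (i < j)%nat -> u i < u j.
Proof.
  intros Hu i j Hij. induction Hij as [|j _ IH]; [apply Hu|].
  eapply Rlt_trans; [exact IH | apply Hu].
Qed.

(* Each step either lands on a point of [B] or advances by 1; since [B] has finitely
   many points in [u k, u k + 1], the sequence cannot stay below [u k + 1]. *)
Lemma locally_finite_steps_escape B (u : nat -> R) : locally_finite B ->
  (forall k, u k < u (S k)) -> (forall k, B (u (S k)) \/ u (S k) = u k + 1) ->
  forall k, exists k', u k + 1 <= u k'.
Proof.
  intros LF Hu Hstep k. apply NNPP. intros Hno.
  assert (Below : forall j, u j < u k + 1).
  { intro j. destruct (Rlt_le_dec (u j) (u k + 1)) as [|h]; auto. exfalso; eauto. }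
  assert (Above : forall j, u k <= u (k + j)%nat).
  { intro j. destruct j; [rewrite Nat.add_0_r; lra|]. left; apply nat_seq_lt; auto; lia. }
  destruct (LF (u k) (u k + 1)) as [l Hl].
  set (v := fun j => u (S (k + j))).
  assert (Hinj : Injective v).
  { intros i j E. unfold v in E. destruct (Nat.lt_total i j) as [h|[h|h]]; auto; exfalso;
      [assert (u (S (k + i)) < u (S (k + j))) | assert (u (S (k + j)) < u (S (k + i)))];
      try (apply nat_seq_lt; auto; lia); lra. }
  assert (Hincl : incl (map v (seq 0 (S (length l)))) l).
  { intros y Hy. apply in_map_iff in Hy as [j [<- _]]. unfold v. apply Hl.
    - destruct (Hstep (k + j)%nat) as [|E]; auto.
      specialize (Below (S (k + j))). specialize (Above j). lra.
    - specialize (Below (S (k + j))). specialize (Above (S j)).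
      rewrite Nat.add_succ_r in Above. lra. }
  apply NoDup_incl_length in Hincl; [|apply Injective_map_NoDup, seq_NoDup; auto].
  rewrite length_map, length_seq in Hincl. lia.
Qed.

Lemma locally_finite_subdivision_nat B : (forall b, B b -> dyadic b) -> locally_finite B ->
  exists u : nat -> R, u O = 0 /\
    (forall k, u k < u (S k) /\ dyadic (u k) /\ no_point_between B (u k) (u (S k))) /\
    forall M, exists k, M < u k.
Proof.
  intros Bdy LF.
  set (next_spec := fun t s => t < s <= t + 1 /\ dyadic s /\ (B s \/ s = t + 1) /\
                                no_point_between B t s).
  set (next := fun t => epsilon (inhabits 0) (next_spec t)).
  set (u := fun k => Nat.iter k next 0).
  assert (Hu : forall k, dyadic (u k) /\ next_spec (u k) (u (S k))).
  { intro k. assert (Hk : dyadic (u k)).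
    { induction k as [|k IH]; [apply (dyadic_IZR 0)|].
      apply (epsilon_spec _ (next_spec (u k))), locally_finite_next; auto. }
    split; auto. apply (epsilon_spec _ (next_spec (u k))), locally_finite_next; auto. }
  assert (Hlt : forall k, u k < u (S k)) by (intro k; destruct (Hu k) as [_ [? _]]; lra).
  assert (Hstep : forall k, B (u (S k)) \/ u (S k) = u k + 1) by (intro k; apply (Hu k)).
  exists u. split; [reflexivity|split].
  - intro k. destruct (Hu k) as [Hk [_ [_ [_ Hno]]]]. auto.
  - assert (Esc := locally_finite_steps_escape B u LF Hlt Hstep).
    assert (Hnat : forall N, exists k, INR N <= u k).
    { induction N as [|N [k Hk]]; [exists O; simpl; lra|].
      destruct (Esc k) as [k' Hk']. exists k'. rewrite S_INR. lra. }
    intro M. destruct (INR_unbounded M) as [N HN]. destruct (Hnat N) as [k Hk].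
    exists k. lra.
Qed.

Lemma locally_finite_subdivision B : (forall b, B b -> dyadic b) -> locally_finite B ->
  exists x : Z -> R,
    (forall n, x n < x (n + 1)%Z /\ dyadic (x n) /\ no_point_between B (x n) (x (n + 1)%Z)) /\
    (forall M, exists n, M < x n) /\ (forall M, exists n, x n < M).
Proof.
  intros Bdy LF.
  set (B' := fun y => B (- y)).
  assert (Bdy' : forall b, B' b -> dyadic b).
  { intros b Hb. rewrite <- (Ropp_involutive b). apply dyadic_opp, Bdy, Hb. }
  assert (LF' : locally_finite B').
  { intros a b. destruct (LF (- b) (- a)) as [l Hl]. exists (map Ropp l).
    intros y Hy Hab. rewrite <- (Ropp_involutive y). apply in_map, Hl; auto; lra. }
  destruct (locally_finite_subdivision_nat B Bdy LF) as [u [Hu0 [Hu Hu_up]]].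
  destruct (locally_finite_subdivision_nat B' Bdy' LF') as [w [Hw0 [Hw Hw_up]]].
  exists (fun n => match n with
                   | Z0 => 0 | Zpos p => u (Pos.to_nat p) | Zneg p => - w (Pos.to_nat p) end).
  split; [|split].
  - intros [|p|p].
    + simpl. rewrite <- Hu0. change 1%positive with (Pos.of_succ_nat 0).
      rewrite SuccNat2Pos.id_succ. apply Hu.
    + rewrite <- Pos2Z.inj_add, Pos2Nat.inj_add, Nat.add_comm. apply Hu.
    + assert (Hrefl : forall k, - w (S k) < - w k /\ dyadic (- w (S k)) /\
                               no_point_between B (- w (S k)) (- w k)).
      { intro k. destruct (Hw k) as [Hlt _]. destruct (Hw (S k)) as [_ [Hdy _]].
        destruct (Hw k) as [_ [_ Hno]].
        split; [lra|split; [apply dyadic_opp, Hdy|]].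
        intros y By Hy. apply (Hno (- y)); [unfold B'; rewrite Ropp_involutive; auto|lra]. }
      destruct (Pos.eq_dec p 1) as [->|Hp].
      * simpl. rewrite <- Ropp_0, <- Hw0. apply (Hrefl O).
      * replace (Z.neg p + 1)%Z with (Z.neg (p - 1)) by lia.
        replace (Pos.to_nat p) with (S (Pos.to_nat (p - 1))) by lia. apply Hrefl.
  - intro M. destruct (Hu_up M) as [k Hk]. exists (Z.pos (Pos.of_succ_nat k)).
    rewrite SuccNat2Pos.id_succ.
    destruct (Hu k). lra.
  - intro M. destruct (Hw_up (- M)) as [k Hk]. exists (Z.neg (Pos.of_succ_nat k)).
    rewrite SuccNat2Pos.id_succ. destruct (Hw k). lra.
Qed.

Definition locally_GA (h : R -> R) (x : R) : Prop :=
  exists eps, 0 < eps /\ exists g, GA_valid g /\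
    forall y, Rabs (y - x) < eps -> h y = ga_app g y.

(* With [s] the supremum of the points up to which [g] describes [h], the germ at [s]
   overlaps [g] on the left of [s], hence equals [g] and pushes past [s] unless [s = v]. *)
Lemma GA_germ_extends_right h m v g : m < v ->
  (forall x, m < x < v -> locally_GA h x) ->
  (exists e, 0 < e /\ forall y, Rabs (y - m) < e -> h y = ga_app g y) ->
  forall y, m <= y < v -> h y = ga_app g y.
Proof.
  intros Hmv Hloc [e [He Hm]].
  set (E := fun y => m <= y <= v /\ forall z, m <= z <= y -> h z = ga_app g z).
  assert (Em : E (Rmin (m + e / 2) v)).
  { split; [split; [apply Rmin_glb|apply Rmin_r]; lra|].
    intros z Hz. apply Hm. pose proof (Rmin_l (m + e / 2) v). apply Rabs_def1; lra. }
  destruct (completeness E) as [s [Hub Hleast]].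
  { exists v. intros y [Hy _]. lra. }
  { eexists; exact Em. }
  assert (Hms : m < s) by (apply Hub in Em; pose proof (Rmin_glb_lt (m + e / 2) v m); lra).
  assert (Below : forall z, m <= z < s -> h z = ga_app g z).
  { intros z Hz. destruct (classic (exists y, E y /\ z < y)) as [[y [[_ Ey] Hzy]]|Hn].
    - apply Ey. lra.
    - exfalso. assert (s <= z); [|lra]. apply Hleast. intros y Ey.
      destruct (Rle_lt_dec y z); auto. exfalso. eauto. }
  intros y Hy. destruct (Rlt_le_dec y s) as [Hys|Hsy]; [apply Below; lra|].
  exfalso. destruct (Hloc s ltac:(lra)) as [e' [He' [g' [_ Hs]]]].
  set (z1 := Rmax m (s - e' / 2)). set (z2 := (z1 + s) / 2).
  assert (Hz1 : m <= z1 /\ s - e' / 2 <= z1 /\ z1 < s)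
    by (unfold z1; split; [apply Rmax_l|split; [apply Rmax_r|apply Rmax_lub_lt; lra]]).
  assert (Hgg' : g = g').
  { apply (ga_eq_two_points g g' z1 z2); [unfold z2; lra | |].
    - rewrite <- Below, Hs by (try apply Rabs_def1; unfold z2 in *; lra). reflexivity.
    - rewrite <- Below, Hs by (try apply Rabs_def1; unfold z2 in *; lra). reflexivity. }
  subst g'. set (y' := Rmin (s + e' / 2) v).
  assert (Ey' : E y').
  { unfold y'. pose proof (Rmin_l (s + e' / 2) v). pose proof (Rmin_r (s + e' / 2) v).
    split; [split; [apply Rmin_glb|]; lra|].
    intros z Hz. destruct (Rlt_le_dec z s); [apply Below; lra|].
    apply Hs, Rabs_def1; lra. }
  apply Hub in Ey'. assert (s < y') by (unfold y'; apply Rmin_glb_lt; lra). lra.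
Qed.

Lemma continuous_agree_right_end h g m v : m < v -> continuity_pt h v ->
  (forall y, m <= y < v -> h y = ga_app g y) -> h v = ga_app g v.
Proof.
  intros Hmv Hc Hagr. apply NNPP. intros Hne.
  set (phi := fun y => h y - ga_app g y).
  assert (Hp : 0 < Rabs (phi v)) by (apply Rabs_pos_lt; unfold phi; lra).
  assert (Cphi : continuity_pt phi v) by (apply continuity_pt_minus; [exact Hc|apply ga_continuity]).
  destruct (Cphi _ Hp) as [d [Hd Hnear]].
  set (y := v - Rmin d (v - m) / 2).
  assert (0 < Rmin d (v - m)) by (apply Rmin_glb_lt; lra).
  pose proof (Rmin_l d (v - m)). pose proof (Rmin_r d (v - m)).
  assert (Hy : phi y = 0) by (unfold phi; rewrite Hagr; [ring|unfold y; lra]).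
  specialize (Hnear y). simpl in Hnear. unfold R_dist in Hnear.
  rewrite Hy, Rminus_0_l, Rabs_Ropp in Hnear.
  assert (Rabs (phi v) < Rabs (phi v)); [|lra].
  apply Hnear. split; [split; [exact I|unfold y; lra]|]. apply Rabs_def1; unfold y; lra.
Qed.

Lemma GA_germ_extends_right_closed h m v g : m < v -> continuity h ->
  (forall x, m < x < v -> locally_GA h x) ->
  (exists e, 0 < e /\ forall y, Rabs (y - m) < e -> h y = ga_app g y) ->
  forall y, m <= y <= v -> h y = ga_app g y.
Proof.
  intros Hmv Hc Hloc Hm y [Hmy [Hyv|Hyv]].
  - apply (GA_germ_extends_right h m v); auto.
  - subst y. apply (continuous_agree_right_end h g m); auto.
    apply (GA_germ_extends_right h m v); auto.
Qed.

Lemma ga_app_reflect n r y : ga_app (n, - r) y = - ga_app (n, r) (- y).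
Proof. unfold ga_app; simpl. ring. Qed.

(* The mirror image of the right extension, through [y |-> - h (- y)]. *)
Lemma GA_germ_extends_left_closed h u m g : u < m -> continuity h ->
  (forall x, u < x < m -> locally_GA h x) ->
  (exists e, 0 < e /\ forall y, Rabs (y - m) < e -> h y = ga_app g y) ->
  forall y, u <= y <= m -> h y = ga_app g y.
Proof.
  intros Hum Hc Hloc [e [He Hm]] y Hy. destruct g as [n r].
  set (h' := fun y => - h (- y)).
  assert (Abs : forall a b, Rabs (- a - b) = Rabs (a - - b))
    by (intros; rewrite <- Rabs_Ropp; f_equal; ring).
  assert (E : h' (- y) = ga_app (n, - r) (- y)).
  { apply (GA_germ_extends_right_closed h' (- m) (- u)); try lra.
    - intro x. apply continuity_pt_opp, continuity_pt_comp; [reg | apply Hc].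
    - intros x Hx. destruct (Hloc (- x) ltac:(lra)) as [e' [He' [[n' r'] [Hg' Hx']]]].
      exists e'. split; [exact He'|]. exists (n', - r'). split; [apply dyadic_opp, Hg'|].
      intros z Hz. unfold h'. rewrite ga_app_reflect, Hx'; [reflexivity|].
      rewrite Abs, Ropp_involutive; exact Hz.
    - exists e. split; [exact He|]. intros z Hz.
      unfold h'. rewrite ga_app_reflect, Hm; [reflexivity|]. rewrite Abs; exact Hz. }
  unfold h' in E. rewrite ga_app_reflect, !Ropp_involutive in E. lra.
Qed.

Lemma GA_on_segment h u v : u < v -> continuity h ->
  (forall x, u < x < v -> locally_GA h x) ->
  exists g, GA_valid g /\ forall y, u <= y <= v -> h y = ga_app g y.
Proof.
  intros Huv Hc Hloc. set (m := (u + v) / 2).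
  destruct (Hloc m ltac:(unfold m; lra)) as [e [He [g [Hg Hm]]]].
  exists g. split; [exact Hg|]. intros y Hy. destruct (Rle_lt_dec y m).
  - apply (GA_germ_extends_left_closed h u m); eauto; [unfold m; lra| |lra].
    intros x Hx. apply Hloc. unfold m in *; lra.
  - apply (GA_germ_extends_right_closed h m v); eauto; [unfold m; lra| |lra].
    intros x Hx. apply Hloc. unfold m in *; lra.
Qed.

Lemma PL2_data h : is_PL2 h -> exists d, PL_data h d.
Proof.
  intros [[Hc _] [B [Bdy [LF Loc]]]].
  destruct (locally_finite_subdivision B Bdy LF) as [x [Hx [Hup Hdown]]].
  assert (Hpiece : forall n, exists g, GA_valid g /\
                     forall y, x n <= y <= x (n + 1)%Z -> h y = ga_app g y).
  { intro n. destruct (Hx n) as [Hlt [_ Hno]]. apply GA_on_segment; auto.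
    intros z Hz. apply Loc. intro Bz. exact (Hno z Bz Hz). }
  set (gam := fun n => epsilon (inhabits (0%Z, 0)) (fun g => GA_valid g /\
                 forall y, x n <= y <= x (n + 1)%Z -> h y = ga_app g y)).
  assert (Hgam : forall n, GA_valid (gam n) /\
                   forall y, x n <= y <= x (n + 1)%Z -> h y = ga_app (gam n) y)
    by (intro n; apply epsilon_spec, Hpiece).
  exists (x, gam). repeat split; simpl; auto; intro n; try apply Hx; apply Hgam.
Qed.

Lemma homeo_comp h1 h2 : homeo h1 -> homeo h2 -> homeo (fun x => h1 (h2 x)).
Proof.
  intros [C1 [g1 [Cg1 [L1 R1]]]] [C2 [g2 [Cg2 [L2 R2]]]].
  split; [apply (continuity_comp h2 h1); auto|].
  exists (fun y => g2 (g1 y)). split; [apply (continuity_comp g1 g2); auto|].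
  split; intro x; [rewrite L1, L2 | rewrite R2, R1]; reflexivity.
Qed.

Lemma locally_finite_preimage h B : homeo h -> locally_finite B ->
  locally_finite (fun y => B (h y)).
Proof.
  intros [Hc [g [_ [Hgh _]]]] LF a b. destruct (Rle_lt_dec a b) as [Hab|Hab].
  2: { exists nil. intros; lra. }
  assert (Cab : forall c, a <= c <= b -> continuity_pt h c) by auto.
  destruct (continuity_ab_maj h a b Hab Cab) as [M [HM _]].
  destruct (continuity_ab_min h a b Hab Cab) as [m [Hm _]].
  destruct (LF (h m) (h M)) as [l Hl]. exists (map g l).
  intros y By Hy. rewrite <- (Hgh y). apply in_map, Hl; auto.
Qed.

Lemma locally_GA_comp h1 h2 x : continuity_pt h2 x ->
  locally_GA h1 (h2 x) -> locally_GA h2 x -> locally_GA (fun y => h1 (h2 y)) x.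
Proof.
  intros Hc [e1 [He1 [g1 [Hg1 H1]]]] [e2 [He2 [g2 [Hg2 H2]]]].
  destruct (Hc e1 He1) as [d [Hd Hnear]].
  exists (Rmin e2 d). split; [apply Rmin_glb_lt; auto|].
  exists (ga_comp g1 g2). split; [apply ga_comp_valid; auto|].
  intros y Hy. pose proof (Rmin_l e2 d). pose proof (Rmin_r e2 d).
  rewrite ga_comp_app, <- H2 by lra. apply H1.
  destruct (Req_dec y x) as [->|Hyx]; [rewrite Rminus_diag, Rabs_R0; auto|].
  apply (Hnear y). split; [split; [exact I|auto]|]. simpl; unfold R_dist; lra.
Qed.

Lemma PL2_comp h1 h2 : is_PL2 h1 -> is_PL2 h2 -> is_PL2 (fun x => h1 (h2 x)).
Proof.
  intros [Hh1 [B1 [Bdy1 [LF1 Loc1]]]] [Hh2 [B2 [Bdy2 [LF2 Loc2]]]].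
  split; [apply homeo_comp; auto|].
  exists (fun y => B2 y \/ B1 (h2 y)). split; [|split].
  - intros b [Hb|Hb]; auto. destruct (classic (B2 b)) as [|Hnb]; auto.
    destruct (Loc2 b Hnb) as [e [He [g [Hg Hb2]]]].
    assert (E : h2 b = ga_app g b) by (apply Hb2; rewrite Rminus_diag, Rabs_R0; auto).
    rewrite <- (ga_inv_app g b), <- E. apply ga_app_dyadic, Bdy1; auto. apply ga_inv_valid, Hg.
  - intros a b. destruct (LF2 a b) as [l2 Hl2].
    destruct (locally_finite_preimage h2 B1 Hh2 LF1 a b) as [l1 Hl1].
    exists (l2 ++ l1). intros y [Hy|Hy] Hab; apply in_or_app; auto.
  - intros x Hx. apply not_or_and in Hx as [Hx2 Hx1].
    apply locally_GA_comp; [apply Hh2 | apply Loc1 | apply Loc2]; auto.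
Qed.

Lemma Z_seq_lt (x : Z -> R) : (forall n, x n < x (n + 1)%Z) ->
  forall i j, (i < j)%Z -> x i < x j.
Proof.
  intros Hx i j Hij. replace j with (i + Z.of_nat (S (Z.to_nat (j - i - 1))))%Z by lia.
  induction (Z.to_nat (j - i - 1)) as [|k IH]; [apply Hx|].
  eapply Rlt_trans; [exact IH|].
  replace (i + Z.of_nat (S (S k)))%Z with (i + Z.of_nat (S k) + 1)%Z by lia. apply Hx.
Qed.

Lemma Z_seq_bracket (x : Z -> R) t a b : (forall n, x n < x (n + 1)%Z) ->
  x a <= t -> t < x b -> exists n, x n <= t < x (n + 1)%Z.
Proof.
  intros Hx Ha Hb. apply NNPP. intros Hno.
  assert (Hab : (a < b)%Z).
  { destruct (Z_lt_le_dec a b) as [|Hba]; auto.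
    destruct (Z.eq_dec b a) as [->|]; [lra|].
    assert (x b < x a) by (apply Z_seq_lt; auto; lia). lra. }
  assert (Hstep : forall k : nat, x (a + Z.of_nat k)%Z <= t).
  { induction k as [|k IH]; [rewrite Z.add_0_r; exact Ha|].
    destruct (Rle_lt_dec (x (a + Z.of_nat (S k)))%Z t) as [|Hlt]; auto.
    exfalso. apply Hno. exists (a + Z.of_nat k)%Z.
    rewrite Nat2Z.inj_succ, <- Z.add_1_r, Z.add_assoc in Hlt. lra. }
  specialize (Hstep (Z.to_nat (b - a))). rewrite Z2Nat.id in Hstep by lia.
  replace (a + (b - a))%Z with b in Hstep by lia. lra.
Qed.

Section Theta.

Variable f : R -> R.
Hypothesis f_incr : forall x y, x < y -> f x < f y.
Hypothesis f_surj : forall y, exists x, f x = y.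

Lemma f_finv y : f (finv f y) = y.
Proof. apply (epsilon_spec (inhabits 0) (fun x => f x = y)), f_surj. Qed.

Lemma finv_f x : finv f (f x) = x.
Proof.
  set (x' := finv f (f x)). assert (E : f x' = f x) by apply f_finv.
  destruct (Rtotal_order x' x) as [H|[H|H]]; auto; apply f_incr in H; lra.
Qed.

Lemma fZ_succ k x : fZ f (Z.succ k) x = f (fZ f k x).
Proof.
  destruct k as [|p|p]; simpl; auto.
  - rewrite Pos2Nat.inj_add, Nat.add_comm. reflexivity.
  - destruct (Pos.eq_dec p 1) as [->|Hp]; simpl; [rewrite f_finv; reflexivity|].
    rewrite Z.pos_sub_lt by lia. simpl.
    replace (Pos.to_nat p) with (S (Pos.to_nat (p - 1))) by lia.
    simpl. rewrite f_finv. reflexivity.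
Qed.

Lemma fZ_pred k x : fZ f (Z.pred k) x = finv f (fZ f k x).
Proof.
  rewrite <- (Z.succ_pred k) at 2. rewrite fZ_succ, finv_f. reflexivity.
Qed.

Lemma fZ_add a b x : fZ f (a + b) x = fZ f a (fZ f b x).
Proof.
  induction a as [|a IH|a IH] using Z.peano_ind; auto.
  - rewrite Z.add_succ_l, !fZ_succ, IH. reflexivity.
  - rewrite Z.add_pred_l, !fZ_pred, IH. reflexivity.
Qed.

Lemma fZ_opp_l k x : fZ f (- k) (fZ f k x) = x.
Proof. rewrite <- fZ_add, Z.add_opp_diag_l. reflexivity. Qed.

Lemma fZ_opp_r k x : fZ f k (fZ f (- k) x) = x.
Proof. rewrite <- fZ_add, Z.add_opp_diag_r. reflexivity. Qed.

Lemma fZ_lt k x y : x < y -> fZ f k x < fZ f k y.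
Proof.
  revert x y. induction k as [|k IH|k IH] using Z.peano_ind; intros x y H; auto.
  - rewrite !fZ_succ. auto.
  - rewrite !fZ_pred. apply IH in H.
    set (u := fZ f k x) in *. set (v := fZ f k y) in *.
    destruct (Rlt_le_dec (finv f u) (finv f v)) as [h|[h|h]]; auto.
    + apply f_incr in h. rewrite !f_finv in h. lra.
    + apply (f_equal f) in h. rewrite !f_finv in h. lra.
Qed.

Hypothesis f_shift : forall x, f (x + 1) = f x + 2.
Hypothesis f_0 : f 0 = 0.

Lemma f_shift_int z x : f (x + IZR z) = f x + 2 * IZR z.
Proof.
  revert x. induction z as [|z IH|z IH] using Z.peano_ind; intro x.
  - rewrite Rplus_0_r. ring.
  - rewrite succ_IZR, <- Rplus_assoc, f_shift, IH. ring.
  - rewrite <- Z.sub_1_r, minus_IZR.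
    assert (E := f_shift (x + (IZR z - 1))).
    replace (x + (IZR z - 1) + 1) with (x + IZR z) in E by ring.
    rewrite IH in E. lra.
Qed.

Lemma fZ_0 k : fZ f k 0 = 0.
Proof.
  induction k as [|k IH|k IH] using Z.peano_ind; auto.
  - rewrite fZ_succ, IH. exact f_0.
  - rewrite fZ_pred, IH, <- f_0 at 1. apply finv_f.
Qed.

(* [f^-q o T_p o f^q], which is theta_f(T_{p/2^q}) once shown to depend only on [p/2^q]. *)
Definition transl_rep (p : Z) (q : nat) (y : R) : R :=
  fZ f (- Z.of_nat q) (fZ f (Z.of_nat q) y + IZR p).

Definition transl (r : R) : R -> R := theta_GA f (0%Z, r).

Lemma transl_rep_double p q y : transl_rep (2 * p) (S q) y = transl_rep p q y.
Proof.
  unfold transl_rep. rewrite Nat2Z.inj_succ, fZ_succ, mult_IZR.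
  replace (f (fZ f (Z.of_nat q) y) + 2 * IZR p) with (fZ f 1 (fZ f (Z.of_nat q) y + IZR p))
    by (simpl; rewrite f_shift_int; ring).
  rewrite <- fZ_add. f_equal. lia.
Qed.

Lemma transl_rep_scale p q k y : transl_rep (p * 2 ^ Z.of_nat k) (q + k) y = transl_rep p q y.
Proof.
  induction k as [|k IH].
  - rewrite Nat.add_0_r, Z.mul_1_r. reflexivity.
  - rewrite Nat2Z.inj_succ, Z.pow_succ_r, Nat.add_succ_r by lia.
    rewrite Z.mul_comm, <- Z.mul_assoc, transl_rep_double, Z.mul_comm. exact IH.
Qed.

Lemma transl_rep_repr p q p' q' y :
  IZR p / 2 ^ q = IZR p' / 2 ^ q' -> transl_rep p q y = transl_rep p' q' y.
Proof.
  intros E. rewrite <- (transl_rep_scale p q q'), <- (transl_rep_scale p' q' q), Nat.add_comm.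
  f_equal. apply eq_IZR. rewrite !mult_IZR, <- !pow_IZR.
  pose proof (pow2_pos q). pose proof (pow2_pos q').
  apply (Rmult_eq_reg_r (/ (2 ^ q * 2 ^ q'))).
  - simpl. field_simplify; lra.
  - apply Rinv_neq_0_compat. nra.
Qed.

Lemma transl_spec r p q y : r = IZR p / 2 ^ q -> transl r y = transl_rep p q y.
Proof.
  intros E. unfold dyad_rep. apply transl_rep_repr. rewrite <- E. symmetry.
  apply (epsilon_spec (inhabits (0%Z, 0%nat)) (fun pq => r = IZR (fst pq) / 2 ^ snd pq)).
  exists (p, q). exact E.
Qed.

Lemma transl_add r s y : dyadic r -> dyadic s -> transl r (transl s y) = transl (r + s) y.
Proof.
  intros Hr Hs. destruct (dyadic_common_denom r s Hr Hs) as [p1 [p2 [q [E1 E2]]]].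
  rewrite (transl_spec r p1 q), (transl_spec s p2 q), (transl_spec (r + s) (p1 + p2) q)
    by (try rewrite E1, E2, plus_IZR; pose proof (pow2_pos q); auto; field; lra).
  unfold transl_rep. rewrite fZ_opp_r, plus_IZR, Rplus_assoc, (Rplus_comm (IZR p2)).
  reflexivity.
Qed.

Lemma transl_lt r x y : x < y -> transl r x < transl r y.
Proof.
  intros H. apply fZ_lt, Rplus_lt_compat_r, fZ_lt. exact H.
Qed.

Lemma transl_gt r y : dyadic r -> 0 < r -> y < transl r y.
Proof.
  intros [p [q E]] Hr. rewrite (transl_spec r p q) by exact E. unfold transl_rep.
  assert (0 < IZR p).
  { pose proof (pow2_pos q). replace (IZR p) with (r * 2 ^ q) by (rewrite E; field; lra). nra. }
  rewrite <- (fZ_opp_l (Z.of_nat q) y) at 1. apply fZ_lt. lra.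
Qed.

Lemma f_transl s y : dyadic s -> f (transl s y) = transl (2 * s) (f y).
Proof.
  intros [p [q E]]. rewrite (transl_spec s (2 * p) (S q)), (transl_spec (2 * s) (2 * p) q).
  2, 3: rewrite E, mult_IZR; simpl; pose proof (pow2_pos q); field; lra.
  unfold transl_rep. rewrite <- fZ_succ, Nat2Z.inj_succ.
  replace (Z.succ (- Z.succ (Z.of_nat q))) with (- Z.of_nat q)%Z by lia.
  f_equal. f_equal. change (f y) with (fZ f 1 y).
  rewrite <- fZ_add. f_equal.
Qed.

Lemma fZ_transl k s y : dyadic s -> fZ f k (transl s y) = transl (powerRZ 2 k * s) (fZ f k y).
Proof.
  revert s y. induction k as [|k IH|k IH] using Z.peano_ind; intros s y Hs.
  - simpl. rewrite Rmult_1_l. reflexivity.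
  - rewrite !fZ_succ, IH, f_transl by (auto; apply dyadic_mul_powerRZ; auto).
    rewrite <- Z.add_1_r, powerRZ_add by lra. f_equal. simpl. ring.
  - rewrite !fZ_pred, IH by auto.
    set (s' := powerRZ 2 (Z.pred k) * s).
    assert (Hs' : dyadic s') by (apply dyadic_mul_powerRZ; auto).
    assert (Ek : powerRZ 2 k = powerRZ 2 (Z.pred k + 1)) by (f_equal; lia).
    rewrite powerRZ_add in Ek by lra.
    replace (powerRZ 2 k * s) with (2 * s') by (unfold s'; rewrite Ek; simpl; ring).
    rewrite <- (f_finv (fZ f k y)) at 1. rewrite <- f_transl by exact Hs'. apply finv_f.
Qed.

Lemma theta_GA_transl g t : theta_GA f g t = transl (snd g) (fZ f (fst g) t).
Proof. reflexivity. Qed.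

Lemma bar_transl r : bar f r = transl r 0.
Proof. unfold bar, transl, theta_GA. simpl. rewrite fZ_0, Rplus_0_l. reflexivity. Qed.

Lemma theta_GA_comp g1 g2 t : GA_valid g1 -> GA_valid g2 ->
  theta_GA f (ga_comp g1 g2) t = theta_GA f g1 (theta_GA f g2 t).
Proof.
  destruct g1 as [n1 r1], g2 as [n2 r2]. unfold GA_valid; simpl. intros H1 H2.
  rewrite !theta_GA_transl; simpl.
  rewrite fZ_transl, transl_add, fZ_add by (auto; apply dyadic_mul_powerRZ; auto).
  f_equal. ring.
Qed.

Lemma theta_GA_bar g s : GA_valid g -> dyadic s ->
  theta_GA f g (bar f s) = bar f (ga_app g s).
Proof.
  destruct g as [n r]. unfold GA_valid; simpl. intros Hr Hs.
  rewrite theta_GA_transl, !bar_transl; simpl.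
  rewrite fZ_transl, fZ_0, transl_add by (auto; apply dyadic_mul_powerRZ; auto).
  unfold ga_app; simpl. f_equal. ring.
Qed.

Lemma theta_GA_lt g x y : x < y -> theta_GA f g x < theta_GA f g y.
Proof. intros H. apply transl_lt, fZ_lt. exact H. Qed.

Lemma theta_GA_le_inv g x y : theta_GA f g x <= theta_GA f g y -> x <= y.
Proof.
  intros H. destruct (Rle_lt_dec x y) as [|h]; auto. apply (theta_GA_lt g) in h. lra.
Qed.

Lemma bar_lt r s : dyadic r -> dyadic s -> r < s -> bar f r < bar f s.
Proof.
  intros Hr Hs H. rewrite !bar_transl. replace s with ((s - r) + r) by ring.
  rewrite <- transl_add by (auto; apply dyadic_sub; auto).
  apply transl_gt; [apply dyadic_sub; auto | lra].
Qed.

Lemma bar_le_inv r s : dyadic r -> dyadic s -> bar f r <= bar f s -> r <= s.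
Proof.
  intros Hr Hs H. destruct (Rle_lt_dec r s) as [|h]; auto. apply bar_lt in h; auto. lra.
Qed.

Lemma bar_IZR z : bar f (IZR z) = IZR z.
Proof.
  rewrite bar_transl, (transl_spec _ z 0) by (simpl; field). unfold transl_rep. simpl. ring.
Qed.

Definition GA_window (h : R -> R) (t : R) (g : GA_elt) : Prop :=
  exists a b, dyadic a /\ dyadic b /\ bar f a <= t <= bar f b /\
    forall y, a <= y <= b -> h y = ga_app g y.

Lemma bar_interval_meet a b a' b' t : dyadic a -> dyadic b -> dyadic a' -> dyadic b' ->
  bar f a <= t <= bar f b -> bar f a' <= t <= bar f b' ->
  Rmax a a' <= Rmin b b' /\ bar f (Rmax a a') <= t <= bar f (Rmin b b').
Proof.
  intros Ha Hb Ha' Hb' Ht Ht'.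
  assert (Dmax : dyadic (Rmax a a')) by (apply Rmax_case; auto).
  assert (Dmin : dyadic (Rmin b b')) by (apply Rmin_case; auto).
  assert (Lmax : bar f (Rmax a a') <= t) by (apply (Rmax_case a a' (fun z => bar f z <= t)); lra).
  assert (Lmin : t <= bar f (Rmin b b')) by (apply (Rmin_case b b' (fun z => t <= bar f z)); lra).
  split; [apply bar_le_inv; auto; lra | auto].
Qed.

(* Two affine maps describing [h] on windows around [t] may differ, but only when the
   windows meet in the single point [bar c = t], where both send [t] to [bar (h c)]. *)
Lemma GA_window_theta_eq h t g g' : GA_valid g -> GA_valid g' ->
  GA_window h t g -> GA_window h t g' -> theta_GA f g t = theta_GA f g' t.
Proof.
  intros Hg Hg' [a [b [Ha [Hb [Ht Hh]]]]] [a' [b' [Ha' [Hb' [Ht' Hh']]]]].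
  destruct (bar_interval_meet a b a' b' t Ha Hb Ha' Hb' Ht Ht') as [[Hlt|Heq] Hbar].
  - assert (Hmax := Rmax_l a a'). assert (Hmax' := Rmax_r a a').
    assert (Hmin := Rmin_l b b'). assert (Hmin' := Rmin_r b b').
    f_equal. apply (ga_eq_two_points g g' _ _ Hlt); rewrite <- Hh, <- Hh'; auto; lra.
  - assert (Hmax := Rmax_l a a'). assert (Hmax' := Rmax_r a a').
    assert (Hmin := Rmin_l b b'). assert (Hmin' := Rmin_r b b').
    rewrite <- Heq in Hbar, Hmin, Hmin'. set (c := Rmax a a') in *.
    assert (Dc : dyadic c) by (apply Rmax_case; auto).
    replace t with (bar f c) by lra.
    rewrite !theta_GA_bar, <- (Hh c), <- (Hh' c) by (auto; lra). reflexivity.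
Qed.

Lemma PL_data_bracket h d t : PL_data h d ->
  exists n, bar f (fst d n) <= t < bar f (fst d (n + 1)%Z).
Proof.
  intros [Hinc [Hdy [Hup [Hdown _]]]].
  destruct (Hdown (IZR (- up (- t)))) as [a Ha]. destruct (Hup (IZR (up t))) as [b Hb].
  apply bar_lt in Ha; apply bar_lt in Hb; auto using dyadic_IZR.
  rewrite bar_IZR in Ha, Hb. rewrite opp_IZR in Ha.
  pose proof (archimed t). pose proof (archimed (- t)).
  apply (Z_seq_bracket (fun n => bar f (fst d n)) t a b); [|lra|lra].
  intro n. apply bar_lt; auto.
Qed.

Lemma theta_PL_spec h t : is_PL2 h ->
  exists g, GA_valid g /\ GA_window h t g /\ theta_PL f h t = theta_GA f g t.
Proof.
  intros Hh. unfold theta_PL.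
  match goal with |- context [epsilon ?i (PL_data h)] => set (d := epsilon i (PL_data h)) end.
  assert (Hd : PL_data h d) by (apply epsilon_spec, PL2_data, Hh).
  match goal with |- context [epsilon ?i ?P] => set (n := epsilon i P) end.
  assert (Hn : bar f (fst d n) <= t < bar f (fst d (n + 1)%Z))
    by (apply (epsilon_spec _ (fun n => bar f (fst d n) <= t < bar f (fst d (n + 1)%Z))),
          (PL_data_bracket h), Hd).
  destruct Hd as [_ [Hdy [_ [_ [Hval Hpc]]]]].
  exists (snd d n). split; [apply Hval|split; [|reflexivity]].
  exists (fst d n), (fst d (n + 1)%Z). repeat split; auto; lra.
Qed.

Lemma GA_window_comp h1 h2 g1 g2 t : GA_valid g2 ->
  GA_window h2 t g2 -> GA_window h1 (theta_GA f g2 t) g1 ->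
  GA_window (fun x => h1 (h2 x)) t (ga_comp g1 g2).
Proof.
  intros Hg2 [a2 [b2 [Ha2 [Hb2 [Ht2 H2]]]]] [a1 [b1 [Ha1 [Hb1 [Ht1 H1]]]]].
  set (a := ga_app (ga_inv g2) a1). set (b := ga_app (ga_inv g2) b1).
  assert (Ha : dyadic a) by (apply ga_app_dyadic; [apply ga_inv_valid|]; auto).
  assert (Hb : dyadic b) by (apply ga_app_dyadic; [apply ga_inv_valid|]; auto).
  assert (Ht : bar f a <= t <= bar f b).
  { split; apply (theta_GA_le_inv g2); rewrite theta_GA_bar by auto;
      unfold a, b; rewrite ga_app_inv; lra. }
  destruct (bar_interval_meet a2 b2 a b t Ha2 Hb2 Ha Hb Ht2 Ht) as [_ Hbar].
  exists (Rmax a2 a), (Rmin b2 b).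
  split; [apply Rmax_case; auto|split; [apply Rmin_case; auto|split; [exact Hbar|]]].
  intros y Hy. pose proof (Rmax_l a2 a). pose proof (Rmax_r a2 a).
  pose proof (Rmin_l b2 b). pose proof (Rmin_r b2 b).
  rewrite ga_comp_app, H2 by lra. apply H1.
  rewrite <- (ga_app_inv g2 a1), <- (ga_app_inv g2 b1).
  split; apply ga_app_le; fold a b; lra.
Qed.

End Theta.

Theorem mainTheorem6 (f : R -> R)
  (Hf : homeo_plus f)
  (Hf1 : forall x, f (x + 1) = f x + 2)
  (Hf0 : f 0 = 0) :
  forall h1 h2 : R -> R, is_PL2 h1 -> is_PL2 h2 ->
  forall t, theta_PL f (fun x => h1 (h2 x)) t = theta_PL f h1 (theta_PL f h2 t).
Proof.
  destruct Hf as [[_ [g [_ [_ Hfg]]]] Hincr].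
  assert (Hf_surj : forall y, exists x, f x = y) by (intro y; exists (g y); auto).
  intros h1 h2 P1 P2 t.
  destruct (theta_PL_spec f Hincr Hf_surj Hf1 Hf0 h2 t P2) as [g2 [V2 [W2 ->]]].
  destruct (theta_PL_spec f Hincr Hf_surj Hf1 Hf0 h1 (theta_GA f g2 t) P1) as [g1 [V1 [W1 ->]]].
  destruct (theta_PL_spec f Hincr Hf_surj Hf1 Hf0 _ t (PL2_comp h1 h2 P1 P2)) as [g12 [V [W ->]]].
  rewrite <- theta_GA_comp by auto.
  apply (GA_window_theta_eq f Hincr Hf_surj Hf1 Hf0 (fun x => h1 (h2 x))); auto.
  - apply ga_comp_valid; auto.
  - apply GA_window_comp; auto.
Qed.
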